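(* Let $n\ge 2$, $F$ the free group on $g_1,\dots,g_n$, $F^{(1)}=[F,F]$, $F^{(2)}=[F^{(1)},F^{(1)}]$, and let $w\in F^{(1)}\setminus F^{(2)}$. Let $K$ be a field of characteristic $0$. Then for every unipotent matrix $X\in\mathrm{SL}(2,K)$ there exists a group homomorphism $\psi:F\to\mathrm{SL}(2,K)$ with $\psi(w)=X$; equivalently, there exist $Z_1,\dots,Z_n\in\mathrm{SL}(2,K)$ with $w(Z_1,\dots,Z_n)=X$.
   Context: A matrix $X\in\mathrm{SL}(2,K)$ is unipotent if $X-I$ is nilpotent (the identity included). $w(Z_1,\dots,Z_n)$ is the value of the word map of $w$, obtained by substituting $Z_i$ for $g_i$. *)

From HB Require Import structures.
From mathcomp Require Import all_boot all_order all_algebra.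
Set Implicit Arguments. Unset Strict Implicit. Unset Printing Implicit Defensive.
Import GRing.Theory.
Local Open Scope ring_scope.

(* Free group F on generators g_0..g_(n-1): elements are words over letters
   (i, b), meaning g_i if b = false and g_i^-1 if b = true; two words denote
   the same element iff their free reductions coincide. *)
Definition letter (n : nat) := ('I_n * bool)%type.
Definition word (n : nat) := seq (letter n).

Definition linv n (a : letter n) : letter n := (a.1, ~~ a.2).
Definition winv n (w : word n) : word n := rev (map (@linv n) w).

Fixpoint freduce n (w : word n) : word n :=
  match w with
  | [::] => [::]
  | a :: s => match freduce s with
              | b :: r => if b == linv a then r else a :: b :: r
              | [::] => [:: a]
              end
  end.

Definition feq n (u v : word n) : Prop := freduce u = freduce v.

Definition fcomm n (u v : word n) : word n := winv u ++ winv v ++ u ++ v.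

Inductive fgen n (S : word n -> Prop) : word n -> Prop :=
  | fgen_S : forall u, S u -> fgen S u
  | fgen_1 : fgen S [::]
  | fgen_mul : forall u v, fgen S u -> fgen S v -> fgen S (u ++ v)
  | fgen_inv : forall u, fgen S u -> fgen S (winv u)
  | fgen_eq : forall u v, feq u v -> fgen S u -> fgen S v.

Fixpoint derived n (k : nat) : word n -> Prop :=
  match k with
  | 0 => fun _ => True
  | k'.+1 => @fgen n (fun c => exists u v, [/\ @derived n k' u, @derived n k' v & c = fcomm u v])
  end.

Definition word_eval (K : fieldType) n (Z : 'I_n -> 'M[K]_2) (w : word n) : 'M[K]_2 :=
  \prod_(a <- w) (if a.2 then invmx (Z a.1) else Z a.1).

Definition in_SL2 (K : fieldType) (X : 'M[K]_2) : Prop := \det X = 1.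

Definition unipotent (K : fieldType) (X : 'M[K]_2) : Prop :=
  exists k : nat, (X - 1) ^+ k = 0.

From HB Require Import structures.
From mathcomp Require Import all_boot all_order all_algebra.
From mathcomp Require Import zify ring.
Set Implicit Arguments. Unset Strict Implicit. Unset Printing Implicit Defensive.
Import GRing.Theory Num.Theory.
Local Open Scope ring_scope.

(* An element [w] of [F'] traces a closed path in the Cayley graph of [Z^n], the
   abelianization of [F], and [w] lies in [F''] as soon as every edge is crossed
   equally often in both directions (the path is then a product of commutators of
   edge loops).  Send [g_j] to [[t^(M^j), alpha_j], [0, t^(-M^j)]]: the diagonal of
   [w(Z)] is trivial and, for [M] large, its corner entry is a Laurent polynomial in
   [t] with one monomial per edge of direction [i], whose coefficient is [alpha_i]
   times the net number of crossings of that edge.  As [w] is not in [F''], some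
   edge has a nonzero net count, so in characteristic 0 some [t] among [1, 2, ...]
   makes the corner entry nonzero, and rescaling [alpha] reaches every matrix
   [[1, b], [0, 1]].  Every unipotent matrix is conjugate to one of these, and
   conjugating the [Z_j] conjugates [w(Z)]. *)

Section FreeReduction.
Variable n : nat.
Implicit Types (a : letter n) (u v w r : word n).

Lemma linvK a : linv (linv a) = a.
Proof. by case: a => i b; rewrite /linv /= negbK. Qed.

Lemma winv_cat u v : winv (u ++ v) = winv v ++ winv u.
Proof. by rewrite /winv map_cat rev_cat. Qed.

Lemma winvK u : winv (winv u) = u.
Proof. by rewrite /winv map_rev revK -map_comp (eq_map (@linvK)) map_id. Qed.

Lemma winv_cons a u : winv (a :: u) = winv u ++ [:: linv a].
Proof. by rewrite -cat1s winv_cat. Qed.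

(* [push a r] is the reduced form of [a :: r] when [r] is reduced. *)
Definition push a r : word n :=
  if r is b :: r' then (if b == linv a then r' else a :: r) else [:: a].

Lemma freduce_cons a w : freduce (a :: w) = push a (freduce w).
Proof. by rewrite /=; case: (freduce w). Qed.

Fixpoint reduced w : bool :=
  if w is a :: s then (if s is b :: _ then b != linv a else true) && reduced s
  else true.

Lemma push_reduced a r : reduced r -> reduced (push a r).
Proof.
case: r => [|b r] //= /andP[hbr hr].
case: ifP => // /negbT hb /=; rewrite hb hr andbT.
by case: r hbr hr.
Qed.

Lemma pushK a r : reduced r -> push a (push (linv a) r) = r.
Proof.
case: r => [|b r] /=; first by rewrite eqxx.
case/andP=> hbr _; rewrite linvK.
have [eba|_] := eqVneq b a; last by rewrite /= eqxx.
by subst b; case: r hbr => [|c r] //= /negbTE ->.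
Qed.

Definition pushs u r := foldr push r u.

Lemma pushs_cat u v r : pushs (u ++ v) r = pushs u (pushs v r).
Proof. exact: foldr_cat. Qed.

Lemma freduce_pushs w : freduce w = pushs w [::].
Proof. by elim: w => [|a w IH] //; rewrite freduce_cons IH. Qed.

Lemma pushs_reduced u r : reduced r -> reduced (pushs u r).
Proof. by move=> hr; elim: u => [|a u IH] //=; apply: push_reduced. Qed.

Lemma freduce_reduced w : reduced (freduce w).
Proof. by rewrite freduce_pushs; apply: pushs_reduced. Qed.

Lemma push_pushs a q r : reduced q -> reduced r ->
  push a (pushs q r) = pushs (push a q) r.
Proof.
case: q => [|b q] //= /andP[_ hq] hr.
by case: eqP => [->|_] //; rewrite pushK // pushs_reduced.
Qed.

Lemma pushs_freduce u r : reduced r -> pushs u r = pushs (freduce u) r.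
Proof.
move=> hr; elim: u => [|a u IH] //.
by rewrite freduce_cons /= IH push_pushs // freduce_reduced.
Qed.

Lemma freduce_cat u v : freduce (u ++ v) = pushs (freduce u) (freduce v).
Proof.
rewrite !freduce_pushs pushs_cat (pushs_freduce u) ?freduce_pushs //.
exact: pushs_reduced.
Qed.

Lemma feq_cat u u' v v' : feq u u' -> feq v v' -> feq (u ++ v) (u' ++ v').
Proof. by rewrite /feq !freduce_cat => -> ->. Qed.

Lemma pushs_winv u r : reduced r -> pushs (winv u) (pushs u r) = r.
Proof.
elim: u r => //= a u IH r hr.
by rewrite winv_cons pushs_cat /= -{2}(linvK a) pushK ?IH // pushs_reduced.
Qed.

Lemma feq_Vcancel u v : feq (winv u ++ u ++ v) v.
Proof.
by rewrite /feq !freduce_pushs !pushs_cat pushs_winv // -freduce_pushs freduce_reduced.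
Qed.

End FreeReduction.

Section Abelianization.
Variable n : nat.
Implicit Types (a : letter n) (u v w : word n).

Definition zvec := {ffun 'I_n -> int}.
Definition sgnz (b : bool) : int := if b then -1 else 1.
Definition letter_vec a : zvec := [ffun j => if j == a.1 then sgnz a.2 else 0].

Fixpoint abel w : zvec := if w is a :: s then letter_vec a + abel s else 0.

Lemma abel_cat u v : abel (u ++ v) = abel u + abel v.
Proof. by elim: u => [|a u IH] /=; rewrite ?add0r // IH addrA. Qed.

Lemma letter_vec_linv a : letter_vec (linv a) = - letter_vec a.
Proof.
apply/ffunP => j; rewrite !ffunE; case: a => i b /=.
by case: (j == i); case: b; rewrite ?oppr0.
Qed.

Lemma abel_winv u : abel (winv u) = - abel u.
Proof.
elim: u => [|a u IH] /=; first by rewrite oppr0.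
by rewrite winv_cons abel_cat IH /= addr0 letter_vec_linv opprD addrC.
Qed.

Lemma abel_push a r : abel (push a r) = letter_vec a + abel r.
Proof.
case: r => [|b r] //=; case: eqP => [->|] //=.
by rewrite letter_vec_linv addrA subrr add0r.
Qed.

Lemma abel_freduce w : abel (freduce w) = abel w.
Proof. by elim: w => [|a w IH] //; rewrite freduce_cons abel_push IH. Qed.

Lemma abel_feq u v : feq u v -> abel u = abel v.
Proof. by move=> h; rewrite -abel_freduce h abel_freduce. Qed.

Lemma abel_count w i :
  abel w i = (count_mem (i, false) w)%:Z - (count_mem (i, true) w)%:Z.
Proof.
elim: w => [|[j b] w IH] /=; first by rewrite ffunE.
rewrite ffunE IH ffunE /= !xpair_eqE (eq_sym j i).
by case: (i == j); case: b => /=; lia.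
Qed.

Lemma derived1_abel w : derived 1 w -> abel w = 0.
Proof.
elim => //=.
- move=> _ [x [y [_ _ ->]]].
  by rewrite /fcomm !abel_cat !abel_winv addrCA addKr addNr.
- by move=> x y _ hx _ hy; rewrite abel_cat hx hy addr0.
- by move=> x _ h; rewrite abel_winv h oppr0.
- by move=> x y /abel_feq <- _.
Qed.

Lemma derived_closed k :
  [/\ @derived n k [::],
      (forall u v, derived k u -> derived k v -> derived k (u ++ v))
    & forall u, derived k u -> derived k (winv u)].
Proof. by case: k => [|k] //=; split; [apply: fgen_1 | apply: fgen_mul | apply: fgen_inv]. Qed.

Section Balanced.
Variables (E : eqType) (S : word n -> Prop) (f : E -> word n).
Hypotheses (S0 : S [::]) (S_cat : forall u v, S u -> S v -> S (u ++ v))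
  (S_winv : forall u, S u -> S (winv u)) (S_f : forall e, S (f e)).

Definition signed_word (x : E * bool) : word n :=
  if x.2 then winv (f x.1) else f x.1.

Definition balanced (l : seq (E * bool)) :=
  forall e, count_mem (e, false) l = count_mem (e, true) l.

Lemma S_signed_flatten l : S (flatten (map signed_word l)).
Proof.
by elim: l => [|[e [|]] l IH] //=; apply: S_cat => //; rewrite /signed_word /=;
  [apply: S_winv|]; apply: S_f.
Qed.

(* Induction on the length: pair the first letter with a later inverse
   occurrence [x M x^-1 R] and rewrite it as the commutator [[x^-1, M^-1] M R]. *)
Lemma balanced_commutator l : balanced l ->
  fgen (fun c => exists u v, [/\ S u, S v & c = fcomm u v])
       (flatten (map signed_word l)).
Proof.
elim: {l}(size l).+1 {-2}l (ltnSn (size l)) => // m IH [|[e b] l] hsz hb.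
  exact: fgen_1.
have hin : (e, ~~ b) \in l.
  have := hb e; rewrite /= !xpair_eqE eqxx -has_pred1 has_count.
  by case: (b) => /=; lia.
case/splitPr: hin hsz hb => l1 l2 hsz hb.
have hb' : balanced (l1 ++ l2).
  move=> e'; have := hb e'; rewrite /= !count_cat /= !xpair_eqE.
  by case: (b); case: (e' == e) => /=; lia.
have hsz' : (size (l1 ++ l2) < m)%N by move: hsz; rewrite /= !size_cat /=; lia.
have := IH _ hsz' hb'; rewrite map_cat flatten_cat => hMR.
rewrite /= map_cat flatten_cat /=.
set x := signed_word (e, b).
have -> : signed_word (e, ~~ b) = winv x by rewrite /x /signed_word; case: (b); rewrite /= ?winvK.
set M := flatten (map signed_word l1); set R := flatten (map signed_word l2).
have hSx : S x by rewrite /x /signed_word; case: (b) => //=; apply: S_winv.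
apply: (@fgen_eq _ _ (fcomm (winv x) (winv M) ++ (M ++ R))); last first.
  apply: fgen_mul _ hMR; apply: fgen_S; exists (winv x), (winv M).
  by split; [apply: S_winv hSx | apply/S_winv/S_signed_flatten |].
rewrite /fcomm !winvK -!catA.
by do 3!apply: feq_cat => //; apply: feq_Vcancel.
Qed.

End Balanced.

Lemma abel0_derived1 w : abel w = 0 -> derived 1 w.
Proof.
move=> h; have [d0 dcat dinv] := derived_closed 0.
have := @balanced_commutator _ _ (fun i : 'I_n => [:: (i, false)])
  d0 dcat dinv (fun _ => I) w.
have -> : flatten (map (signed_word (fun i : 'I_n => [:: (i, false)])) w) = w.
  by elim: w {h} => [|[i [|]] w IH] //=; rewrite IH.
apply=> i; have := abel_count w i; rewrite h ffunE => /esym/eqP.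
by rewrite subr_eq0 eqz_nat => /eqP.
Qed.

End Abelianization.

Section LatticePaths.
Variable n : nat.
Implicit Types (a : letter n) (w : word n) (p : zvec n).

Definition gen_pow (i : 'I_n) (z : int) : word n :=
  match z with Posz m => nseq m (i, false) | Negz m => nseq m.+1 (i, true) end.

Definition lattice_word p : word n := flatten [seq gen_pow i (p i) | i <- enum 'I_n].

(* The loop through the edge [e] of the Cayley graph of [Z^n]: go to the lattice
   point [e.1], cross the edge in direction [e.2], and return to the origin. *)
Definition edge_loop (e : zvec n * 'I_n) : word n :=
  lattice_word e.1 ++ [:: (e.2, false)] ++ winv (lattice_word (e.1 + letter_vec (e.2, false))).

(* The edges crossed by [w] read from the lattice point [p]; an edge is named by
   its lower endpoint and direction, the boolean records a backward crossing. *)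
Fixpoint edge_path p w : seq ((zvec n * 'I_n) * bool) :=
  if w is a :: s then
    ((if a.2 then p + letter_vec a else p, a.1), a.2) :: edge_path (p + letter_vec a) s
  else [::].

Lemma abel_nseq m a j : abel (nseq m a) j = letter_vec a j *+ m.
Proof. by elim: m => [|m IH] /=; rewrite ffunE ?IH ?mulrS. Qed.

Lemma abel_gen_pow i z j : abel (gen_pow i z) j = if j == i then z else 0.
Proof.
by case: z => m; rewrite /gen_pow abel_nseq ffunE /=; case: (j == i); rewrite ?mul0rn //; lia.
Qed.

Lemma abel_lattice_word p : abel (lattice_word p) = p.
Proof.
apply/ffunP => j; have abel_flatten (s : seq 'I_n) :
    abel (flatten [seq gen_pow i (p i) | i <- s]) j = \sum_(i <- s) abel (gen_pow i (p i)) j.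
  by elim: s => [|i s IH] /=; rewrite ?big_nil ?ffunE // abel_cat ffunE IH big_cons.
rewrite abel_flatten; under eq_bigr do rewrite abel_gen_pow.
rewrite big_enum /= (bigD1 j) //= eqxx big1 ?addr0 // => i /negbTE.
by rewrite eq_sym => ->.
Qed.

Lemma lattice_word0 : lattice_word 0 = [::].
Proof. by rewrite /lattice_word; elim: (enum _) => [|i l IH] //=; rewrite IH ffunE. Qed.

Lemma edge_loop_derived1 e : derived 1 (edge_loop e).
Proof.
apply: abel0_derived1.
by rewrite /edge_loop !abel_cat abel_winv !abel_lattice_word /= addr0 addrA subrr.
Qed.

Lemma feq_lattice_word_edge_loops p w : feq (lattice_word p ++ w)
  (flatten (map (signed_word edge_loop) (edge_path p w)) ++ lattice_word (p + abel w)).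
Proof.
elim: w p => [|[i b] s IH] p /=; first by rewrite addr0 cats0.
(* Insert [winv (lattice_word p') ++ lattice_word p'] after the first letter. *)
set p' := p + letter_vec (i, b); rewrite addrA -/p'.
suff step : feq (lattice_word p ++ (i, b) :: s)
    (signed_word edge_loop ((if b then p' else p, i), b) ++ lattice_word p' ++ s).
  by rewrite /feq step -catA; apply: feq_cat (IH p').
rewrite /signed_word /edge_loop; case: b @p' => p' /=.
  have -> : p' + letter_vec (i, false) = p.
    by rewrite /p' (letter_vec_linv (i, false)) subrK.
  rewrite winv_cat winv_cons winvK.
all: rewrite -?catA /=; apply: feq_cat => //; apply: (@feq_cat _ [:: _] [:: _]) => //.
all: exact/esym/feq_Vcancel.
Qed.

Lemma balanced_derived2 w : derived 1 w -> balanced (edge_path 0 w) -> derived 2 w.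
Proof.
move=> hw hb; have [d0 dcat dinv] := @derived_closed n 1.
apply: fgen_eq (balanced_commutator d0 dcat dinv edge_loop_derived1 hb).
have := feq_lattice_word_edge_loops 0 w.
by rewrite lattice_word0 derived1_abel // addr0 lattice_word0 cats0.
Qed.

Lemma unbalanced_edge w : derived 1 w -> ~ derived 2 w ->
  exists2 e, e \in map fst (edge_path 0 w) &
    count_mem (e, false) (edge_path 0 w) != count_mem (e, true) (edge_path 0 w).
Proof.
move=> hw1 hw2; set l := edge_path 0 w.
have [hall|/allPn [e he hne]] :=
  boolP (all (fun e => count_mem (e, false) l == count_mem (e, true) l) (map fst l)).
  exfalso; apply/hw2/balanced_derived2 => // e.
  have [hin|hnin] := boolP (e \in map fst l); first exact/eqP/(allP hall).
  have count0 b : count_mem (e, b) l = 0%N.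
    by apply/count_memPn; apply: contra hnin => hx; apply/mapP; exists (e, b).
  by rewrite !count0.
by exists e.
Qed.

Lemma edge_path_bound p w x j : x \in edge_path p w ->
  p j - (size w)%:Z <= x.1.1 j <= p j + (size w)%:Z.
Proof.
elim: w p => [|[i b] u IH] p //=; rewrite inE => /orP [/eqP -> | hx] /=.
  by case: b => /=; rewrite ?ffunE /=; case: (j == i) => /=; lia.
by have := IH _ hx; rewrite !ffunE /=; case: (j == i); case: (b) => /=; lia.
Qed.

End LatticePaths.

Section Matrix2.
Variable K : fieldType.
Implicit Types (A B N : 'M[K]_2) (x y z t : K).

Lemma mulmx2E A B i j : (A * B) i j = A i 0 * B 0 j + A i 1 * B 1 j.
Proof.
rewrite -mulmxE !mxE !big_ord_recl big_ord0 addr0.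
by congr (A _ _ * B _ _ + A _ _ * B _ _); apply: val_inj.
Qed.

Lemma det_mx2 A : \det A = A 0 0 * A 1 1 - A 0 1 * A 1 0.
Proof.
rewrite (expand_det_row _ 0) !big_ord_recl big_ord0 addr0 /cofactor !det_mx11.
rewrite !mxE /= expr0 expr1 !mul1r mulN1r mulrN.
by congr (A _ _ * A _ _ - A _ _ * A _ _); apply: val_inj.
Qed.

Lemma mx2P A B : A 0 0 = B 0 0 -> A 0 1 = B 0 1 -> A 1 0 = B 1 0 -> A 1 1 = B 1 1 ->
  A = B.
Proof.
move=> h00 h01 h10 h11; apply/matrixP => i j.
have e0 (h : (0 < 2)%N) : Ordinal h = 0 by apply: val_inj.
have e1 (h : (1 < 2)%N) : Ordinal h = 1 by apply: val_inj.
by case: i => [[|[|i]]] // hi; case: j => [[|[|j]]] // hj; rewrite ?e0 ?e1.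
Qed.

Lemma mx2_cayley_hamilton N : N * N = (N 0 0 + N 1 1) *: N - \det N *: 1.
Proof. by apply: mx2P; rewrite !mulmx2E det_mx2 !mxE /=; ring. Qed.

Lemma nilpotent_mx2_sqr k N : N ^+ k = 0 -> N * N = 0.
Proof.
case: k => [|k hN]; first by rewrite expr0 => /eqP; rewrite oner_eq0.
have detN : \det N = 0.
  have := congr1 determinant hN; rewrite det0.
  elim: k {hN} => [|k IH]; first by rewrite expr1.
  by rewrite exprS detM => /eqP; rewrite mulf_eq0 => /orP[/eqP|/eqP/IH].
set t := N 0 0 + N 1 1.
have NN : N * N = t *: N by rewrite mx2_cayley_hamilton detN scale0r subr0.
have Npow m : N ^+ m.+1 = t ^+ m *: N.
  elim: m => [|m IH]; first by rewrite expr1 expr0 scale1r.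
  by rewrite exprSr IH -scalerAl NN scalerA exprSr.
move: hN; rewrite Npow => /eqP; rewrite scaler_eq0 expf_eq0 => /orP[/andP[_ /eqP t0]|/eqP ->].
  by rewrite NN t0 scale0r.
by rewrite mul0r.
Qed.

Definition upper x y : 'M[K]_2 :=
  \matrix_(i, j) if (i : nat) == 0%N then (if (j : nat) == 0%N then x else y)
                 else (if (j : nat) == 0%N then 0 else x^-1).

Lemma upper00 x y : upper x y 0 0 = x. Proof. by rewrite mxE. Qed.
Lemma upper01 x y : upper x y 0 1 = y. Proof. by rewrite mxE. Qed.
Lemma upper10 x y : upper x y 1 0 = 0. Proof. by rewrite mxE. Qed.
Lemma upper11 x y : upper x y 1 1 = x^-1. Proof. by rewrite mxE. Qed.
Definition upperE := (upper00, upper01, upper10, upper11).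

Lemma upperM x y z t : x != 0 -> z != 0 ->
  upper x y * upper z t = upper (x * z) (x * t + y / z).
Proof.
move=> x0 z0; apply: mx2P; rewrite mulmx2E !upperE ?mul0r ?mulr0 ?addr0 ?add0r //.
by rewrite invfM mulrC.
Qed.

Lemma upper_id : upper 1 0 = 1.
Proof. by apply: mx2P; rewrite !upperE ?invr1 !mxE. Qed.

Lemma det_upper x y : x != 0 -> \det (upper x y) = 1.
Proof. by move=> x0; rewrite det_mx2 !upperE mulr0 subr0 mulfV. Qed.

Lemma mulr1_invmx A B : A * B = 1 -> invmx A = B.
Proof.
move=> AB; have [unitA _] := mulmx1_unit AB.
by rewrite -[invmx _]mulr1 -AB mulrA -!mulmxE mulVmx // mul1mx.
Qed.

Lemma invmx_upper x y : x != 0 -> invmx (upper x y) = upper x^-1 (- y).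
Proof.
move=> x0; apply: mulr1_invmx.
by rewrite upperM ?invr_eq0 // mulfV // invrK mulrN (mulrC y x) addNr upper_id.
Qed.

Lemma word_eval_cons n (Z : 'I_n -> 'M[K]_2) a w :
  word_eval Z (a :: w) = (if a.2 then invmx (Z a.1) else Z a.1) * word_eval Z w.
Proof. by rewrite /word_eval big_cons. Qed.

Lemma word_eval_conj n G (Z : 'I_n -> 'M[K]_2) w :
  G \in unitmx -> (forall i, Z i \in unitmx) ->
  word_eval (fun i => G * Z i / G) w = G * word_eval Z w / G.
Proof.
move=> unitG unitZ; elim: w => [|[i b] w IH].
  by rewrite /word_eval !big_nil mulr1 divrr.
rewrite !word_eval_cons IH /=.
have -> : (if b then invmx (G * Z i / G) else G * Z i / G) =
          G * (if b then invmx (Z i) else Z i) / G.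
  case: b => //; apply: mulr1_invmx.
  by rewrite !mulrA divrK // -(mulrA G) -mulmxE mulmxV // mulmxE mulr1 divrr.
by rewrite !mulrA divrK.
Qed.

End Matrix2.

Section Encoding.
Variables (n M : nat).
Implicit Types (p q : zvec n).

Definition encode q : int := \sum_(j < n) q j * (M ^ j)%N%:Z.

Lemma encode0 : encode 0 = 0.
Proof. by rewrite /encode big1 // => j _; rewrite ffunE mul0r. Qed.

Lemma encodeD p q : encode (p + q) = encode p + encode q.
Proof. by rewrite /encode -big_split; apply: eq_bigr => j _; rewrite ffunE mulrDl. Qed.

Lemma encode_letter_vec (a : letter n) : encode (letter_vec a) = sgnz a.2 * (M ^ a.1)%N%:Z.
Proof.
rewrite /encode (bigD1 a.1) //= ffunE eqxx big1 ?addr0 // => j /negbTE j_a.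
by rewrite ffunE j_a mul0r.
Qed.

End Encoding.

Lemma base_digits_eq0 (M m : nat) (c : 'I_m -> int) : (forall j, - (M : int) < c j < M) ->
  \sum_(j < m) c j * (M ^ j)%N%:Z = 0 -> forall j, c j = 0.
Proof.
elim: m c => [|m IH] c c_bnd c_sum j; first by case: j.
rewrite big_ord_recl /= in c_sum.
set h := \sum_(j < m) c (lift ord0 j) * (M ^ j)%N%:Z.
have c_sum' : c ord0 + M%:Z * h = 0.
  rewrite -c_sum /h mulr_sumr expn0 mulr1; congr (_ + _); apply: eq_bigr => k _.
  by rewrite /bump /= add1n expnS PoszM; ring.
have h0 : h = 0 by have := c_bnd ord0; move: c_sum'; nia.
have [j' ->|->] := unliftP ord0 j; last by move: c_sum'; rewrite h0 mulr0 addr0.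
by apply: (IH (fun k => c (lift ord0 k))) => // k; apply: c_bnd.
Qed.

Section BoundedEncoding.
Variables (n L : nat).
Implicit Types (q : zvec n).

Definition bounded q := forall j, - (L : int) <= q j <= L.

Notation encodeL := (encode (2 * L).+1).

Lemma encode_inj q q' : bounded q -> bounded q' -> encodeL q = encodeL q' -> q = q'.
Proof.
move=> bq bq' eq_enc; apply/ffunP => j; apply/eqP; rewrite -subr_eq0; apply/eqP.
apply: (@base_digits_eq0 (2 * L).+1 _ (fun j => q j - q' j)) => [k|].
  by have := bq k; have := bq' k; lia.
under eq_bigr do rewrite mulrBl.
by rewrite sumrB -/(encodeL q) -/(encodeL q') eq_enc subrr.
Qed.

Definition encode_offset : int := \sum_(j < n) L%:Z * ((2 * L).+1 ^ j)%N%:Z.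

Lemma encode_offset_ge0 q : bounded q -> 0 <= 2 * encodeL q + 2 * encode_offset.
Proof.
move=> bq; rewrite -mulrDr mulr_ge0 // /encode /encode_offset -big_split /=.
by apply: sumr_ge0 => j _; rewrite -mulrDl mulr_ge0 //; have := bq j; lia.
Qed.

(* Shifted by [2 * encode_offset] to be nonnegative on bounded points. *)
Definition edge_exponent q : nat := absz (2 * encodeL q + 2 * encode_offset).

Lemma edge_exponent_inj q q' : bounded q -> bounded q' ->
  edge_exponent q = edge_exponent q' -> q = q'.
Proof.
move=> bq bq' /(congr1 Posz); rewrite /edge_exponent !gez0_abs ?encode_offset_ge0 //.
by move=> eq_exp; apply: encode_inj => //; lia.
Qed.

End BoundedEncoding.

Section UpperEvaluation.
Variables (K : fieldType) (n M : nat) (s : K) (alpha : 'I_n -> K).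
Hypothesis s_neq0 : s != 0.

Definition upper_gen (j : 'I_n) : 'M[K]_2 := upper (s ^ (M ^ j)%N%:Z) (alpha j).

Lemma expfz_neq0 z : s ^ z != 0.
Proof. by rewrite expfz_eq0 (negbTE s_neq0) andbF. Qed.

Lemma upper_gen_letter (a : letter n) :
  (if a.2 then invmx (upper_gen a.1) else upper_gen a.1) =
  upper (s ^ encode M (letter_vec a)) ((sgnz a.2)%:~R * alpha a.1).
Proof.
rewrite encode_letter_vec; case: a => i [] /=; last by rewrite /upper_gen !mul1r.
rewrite /upper_gen invmx_upper ?expfz_neq0 // invr_expz mulN1r.
by rewrite mulrN1z mulN1r.
Qed.

Definition edge_term (x : (zvec n * 'I_n) * bool) : K :=
  (sgnz x.2)%:~R * alpha x.1.2 * s ^ (M ^ x.1.2)%N%:Z * s ^ (2 * encode M x.1.1).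

Lemma word_eval_upper_gen w p : exists c,
  word_eval upper_gen w = upper (s ^ encode M (abel w)) c /\
  s ^ encode M p * c * s ^ encode M (p + abel w) = \sum_(x <- edge_path p w) edge_term x.
Proof.
elim: w p => [|a u IH] p.
  exists 0; rewrite /word_eval big_nil /= encode0 expr0z upper_id.
  by rewrite mulr0 mul0r big_nil.
have [c [eval_u c_u]] := IH (p + letter_vec a).
exists (s ^ encode M (letter_vec a) * c + (sgnz a.2)%:~R * alpha a.1 / s ^ encode M (abel u)).
split.
  by rewrite word_eval_cons upper_gen_letter eval_u upperM ?expfz_neq0 //= encodeD expfzDr.
rewrite /= big_cons -c_u addrA !encodeD; move: c_u eval_u.
have := expfz_neq0 (encode M p); have := expfz_neq0 (M ^ a.1)%N%:Z.
have := expfz_neq0 (encode M (abel u)).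
case: a => i [] /= ? ? ? _ _; rewrite /edge_term /= ?encodeD encode_letter_vec /= ?muln1 ?mul1r.
  rewrite (_ : 2 * (encode M p + -1 * (M ^ i)%N%:Z) =
               encode M p + encode M p + - (M ^ i)%N%:Z + - (M ^ i)%N%:Z); last by ring.
  rewrite !expfzDr ?expfz_neq0 // -!invr_expz mulrN1z mulN1r ?muln1.
  by field; apply/andP.
rewrite (_ : 2 * encode M p = encode M p + encode M p); last by ring.
by rewrite !expfzDr ?expfz_neq0 //; field.
Qed.

End UpperEvaluation.

Section EdgePolynomial.
Variables (K : fieldType) (n L : nat) (l : seq ((zvec n * 'I_n) * bool)).
Variables (p0 : zvec n) (i0 : 'I_n).
Hypothesis K0 : [pchar K] =i pred0.
Hypothesis l_bounded : forall x, x \in l -> bounded L x.1.1.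
Hypothesis p0_bounded : bounded L p0.
Hypothesis unbalanced : count_mem ((p0, i0), false) l != count_mem ((p0, i0), true) l.

Definition edge_sum (s : K) : K :=
  \sum_(x <- l | x.1.2 == i0) (sgnz x.2)%:~R * s ^ (2 * encode (2 * L).+1 x.1.1).

Definition edge_poly : {poly K} :=
  \sum_(x <- l | x.1.2 == i0) (sgnz x.2)%:~R *: 'X^(edge_exponent L x.1.1).

Lemma horner_edge_poly s : s != 0 ->
  edge_poly.[s] = edge_sum s * s ^ (2 * encode_offset n L).
Proof.
move=> s0; rewrite /edge_poly horner_sum /edge_sum mulr_suml.
rewrite big_seq_cond [RHS]big_seq_cond; apply: eq_bigr => x /andP[/l_bounded bx _].
rewrite hornerZ hornerXn -mulrA exprnP /edge_exponent gez0_abs ?expfzDr //.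
exact: encode_offset_ge0.
Qed.

Lemma edge_poly_coef : edge_poly`_(edge_exponent L p0) =
  (count_mem ((p0, i0), false) l)%:R - (count_mem ((p0, i0), true) l)%:R.
Proof.
have -> : forall l', (count_mem ((p0, i0), false) l')%:R - (count_mem ((p0, i0), true) l')%:R
    = \sum_(x <- l' | x.1 == (p0, i0)) (sgnz x.2)%:~R :> K.
  elim=> [|[e b] l' IH]; first by rewrite big_nil subrr.
  rewrite big_cons /= -IH !xpair_eqE (eq_sym e).
  by case: (_ == e); case: b => //=; rewrite ?add0n ?natrD; ring.
rewrite /edge_poly coef_sum big_mkcond [RHS]big_mkcond.
apply: eq_big_seq => -[[q i] b] /l_bounded /= bq.
rewrite coefZ coefXn xpair_eqE andbC; case: (i == i0) => //=.
have [->|q_p0] := eqVneq q p0; first by rewrite eqxx mulr1.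
case: eqP => [/edge_exponent_inj eq_q|_]; last by rewrite mulr0.
by case/eqP: q_p0; rewrite eq_q.
Qed.

Lemma natf_sub_neq0 a b : a != b -> a%:R - b%:R != 0 :> K.
Proof.
have natf_neq0 m : (m != 0)%N -> m%:R != 0 :> K by move=> m0; rewrite (pcharf0P K).1.
move=> a_b; have [lt_ab|lt_ba|eq_ab] := ltngtP a b; last by rewrite eq_ab eqxx in a_b.
  by rewrite -opprB -natrB 1?ltnW // oppr_eq0 natf_neq0 // subn_eq0 -ltnNge.
by rewrite -natrB 1?ltnW // natf_neq0 // subn_eq0 -ltnNge.
Qed.

Lemma edge_poly_neq0 : edge_poly != 0.
Proof.
by apply: contraNneq (natf_sub_neq0 unbalanced) => poly0; rewrite -edge_poly_coef poly0 coef0.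
Qed.

(* A nonzero polynomial has finitely many roots, and in characteristic 0 the
   integers [1, 2, ...] give infinitely many distinct nonzero candidates. *)
Lemma exists_edge_sum_neq0 : exists2 s : K, s != 0 & edge_sum s != 0.
Proof.
set cands := [seq (k.+1)%:R : K | k <- iota 0 (size edge_poly)].
have uniq_cands : uniq cands.
  rewrite map_inj_uniq ?iota_uniq // => a b eq_ab; have [//|a_b] := eqVneq a b.
  by have := @natf_sub_neq0 a.+1 b.+1; rewrite eqSS a_b eq_ab subrr eqxx => /(_ isT).
have [s /mapP[k _ ->] s_root] : exists2 s, s \in cands & ~~ root edge_poly s.
  apply/allPn; apply/negP => all_roots.
  by have := max_poly_roots edge_poly_neq0 all_roots uniq_cands; rewrite size_map size_iota ltnn.
have k0 : (k.+1)%:R != 0 :> K by rewrite (pcharf0P K).1.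
exists (k.+1)%:R => //; apply: contra s_root => /eqP sum0.
by rewrite /root horner_edge_poly // sum0 mul0r.
Qed.

End EdgePolynomial.

Lemma unipotent_conj_upper1 (K : fieldType) (X : 'M[K]_2) : unipotent X ->
  exists G b, G \in unitmx /\ X = G * upper 1 b / G.
Proof.
case=> k /nilpotent_mx2_sqr N2.
have N2E i j : ((X - 1) * (X - 1)) i j = 0 by rewrite N2 mxE.
have := N2E 0 0; have := N2E 1 0; have := N2E 1 1.
rewrite !mulmx2E !mxE /= !subr0 => e11 e10 e00.
have [z0|z_neq0] := eqVneq (X 1 0) 0.
  exists 1, (X 0 1); split; first exact: unitr1.
  have sqr0_eq1 (x : K) : (x - 1) * (x - 1) = 0 -> x = 1.
    by move/eqP; rewrite mulf_eq0 orbb subr_eq0 => /eqP.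
  rewrite invr1 mulr1 mul1r; apply: mx2P; rewrite !upperE ?invr1 //; apply: sqr0_eq1.
    by rewrite -e00 z0 mulr0 addr0.
  by rewrite -e11 z0 mul0r add0r.
set x := X 0 0 - 1 in e00 e10 e11.
have X00 : X 0 0 = x + 1 by rewrite subrK.
have X11 : X 1 1 = 1 - x.
  suff : X 1 1 - 1 = - x by move/(congr1 (+%R^~ 1)); rewrite subrK addrC.
  apply: (mulfI z_neq0); apply/eqP; rewrite -subr_eq0 -e10; apply/eqP; ring.
(* The columns of [G] are [v = (X - 1) e_0] and [e_0]: [X] fixes [v] and sends
   [e_0] to [v + e_0]. *)
set G : 'M[K]_2 := \matrix_(i, j) if (i : nat) == 0%N then (if (j : nat) == 0%N then x else 1)
  else (if (j : nat) == 0%N then X 1 0 else 0).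
have unitG : G \in unitmx.
  by rewrite unitmxE det_mx2 !mxE /= mulr0 mul1r sub0r unitfE oppr_eq0.
exists G, 1; split => //; apply: (canRL (mulrK unitG)).
have X01X10 : X 0 1 * X 1 0 = - (x * x) by rewrite -(subr0 (X 0 1 * _)) -e00; ring.
by apply: mx2P; rewrite !mulmx2E !upperE ?invr1 !mxE /= ?X00 ?X11 ?X01X10; ring.
Qed.

Lemma exists_word_eval_upper1 (K : fieldType) n (w : word n) : [pchar K] =i pred0 ->
  derived 1 w -> ~ derived 2 w -> forall b : K,
  exists Z : 'I_n -> 'M[K]_2, (forall i, in_SL2 (Z i)) /\ word_eval Z w = upper 1 b.
Proof.
move=> K0 hw1 hw2 b.
have [[p0 i0] /mapP[[e b0] in_l /= e_eq] unbal] := unbalanced_edge hw1 hw2.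
set l := edge_path 0 w in in_l unbal; set L := size w.
have l_bounded x : x \in l -> bounded L x.1.1.
  by move=> x_l j; have := edge_path_bound j x_l; rewrite ffunE sub0r add0r.
have p0_bounded : bounded L p0 by have := l_bounded _ in_l; rewrite /= -e_eq.
have [s s_neq0 sum_neq0] := exists_edge_sum_neq0 K0 l_bounded p0_bounded unbal.
(* Only [g_i0] gets a nonzero corner entry, scaled so that [w(Z)] has corner [b]. *)
set M := (2 * L).+1; set kappa := s ^ (M ^ i0)%N%:Z.
set beta := b / (kappa * edge_sum L l i0 s).
set alpha := fun j : 'I_n => (j == i0)%:R * beta.
exists (upper_gen M s alpha); split.
  by move=> i; rewrite /in_SL2 det_upper // expfz_neq0.
have [c [-> sum_c]] := word_eval_upper_gen M alpha s_neq0 w 0.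
rewrite derived1_abel // encode0 expr0z; congr upper.
move: sum_c; rewrite add0r derived1_abel // encode0 expr0z mul1r mulr1 => ->.
have kappa_neq0 : kappa != 0 by apply: expfz_neq0.
rewrite -[RHS](divfK (mulf_neq0 kappa_neq0 sum_neq0)) -/beta /edge_sum !mulr_sumr.
rewrite [RHS]big_mkcond; apply: eq_bigr => x _.
rewrite /edge_term /alpha; case: (x.1.2 =P i0) => [->|_] /=; last by rewrite !(mul0r, mulr0).
by rewrite /kappa; ring.
Qed.

Theorem corollary5p3 (n : nat) (hn : (2 <= n)%N) (w : word n)
    (hw1 : derived 1 w) (hw2 : ~ derived 2 w)
    (K : fieldType) (hK : [pchar K] =i pred0)
    (X : 'M[K]_2) (hX : in_SL2 X) (hXu : unipotent X) :
  exists Z : 'I_n -> 'M[K]_2, (forall i, in_SL2 (Z i)) /\ word_eval Z w = X.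
Proof.
(* [hX] and [hn] are redundant: a unipotent 2x2 matrix has determinant 1, and
   [F' = F''] when [n <= 1]. *)
have [G [b [unitG ->]]] := unipotent_conj_upper1 hXu.
have [Z [Z_SL2 eval_Z]] := exists_word_eval_upper1 hK hw1 hw2 b.
have unitZ i : Z i \in unitmx by rewrite unitmxE (Z_SL2 i) unitr1.
exists (fun i => G * Z i / G); split; last by rewrite word_eval_conj // eval_Z.
by move=> i; rewrite /in_SL2 !detM Z_SL2 mulr1 -detM divrr // det1.
Qed.
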